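(* Let $k\ge 2$ be an integer, $0<\bar r\le k$ a residue, and $\mathcal{A}$ the alphabet of all positive integers congruent to $\bar r \pmod k$. Suppose that for every residue $r \pmod k$ there exists a matrix $\begin{pmatrix}a&b\\c&d\end{pmatrix}\in\mathcal{G}_{\mathcal{A}}$ with $\gcd(c,k)=1$ and $d\equiv r\pmod k$. Then for every $n\ge1$ we have $\mathfrak{D}_{\mathcal{A}}\bmod k^n=\mathbb{Z}/k^n\mathbb{Z}$.
   Context: For $a\in\mathbb{N}$ let $\gamma_a=\begin{pmatrix}0&1\\1&a\end{pmatrix}$ and let $\mathcal{G}_{\mathcal{A}}$ be the semigroup generated by $\gamma_a$, $a\in\mathcal{A}$. $\mathfrak{D}_{\mathcal{A}}=\{\langle \gamma e_2,e_2\rangle:\gamma\in\mathcal{G}_{\mathcal{A}}\}$ is the set of lower-right entries of elements of $\mathcal{G}_{\mathcal{A}}$. *)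

From HB Require Import structures.
From mathcomp Require Import all_boot all_order all_algebra.
Set Implicit Arguments. Unset Strict Implicit. Unset Printing Implicit Defensive.
Import Order.TTheory GRing.Theory Num.Theory.
Local Open Scope ring_scope.

Definition i0 : 'I_2 := @Ordinal 2 0 isT.
Definition i1 : 'I_2 := @Ordinal 2 1 isT.

Definition gamma (a : nat) : 'M[int]_2 :=
  \matrix_(i < 2, j < 2)
    (if (nat_of_ord i == 0%N) && (nat_of_ord j == 0%N) then 0
     else if (nat_of_ord i == 1%N) && (nat_of_ord j == 1%N) then (a%:Z)
     else 1).

Inductive inG (A : pred nat) : 'M[int]_2 -> Prop :=
| inG_gen a : A a -> inG A (gamma a)
| inG_mul M N : inG A M -> inG A N -> inG A (M *m N).

(* D_A : lower-right entries <gamma e2, e2> of elements of G_A *)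
Definition inD (A : pred nat) (d : int) : Prop :=
  exists2 M, inG A M & M i1 i1 = d.

Definition alphabet (k rbar : nat) : pred nat :=
  fun a => (0 < a)%N && (a %% k == rbar %% k)%N.

(* Right multiplication by the shear [[1, b], [0, 1]] turns gamma_a into
   gamma_(a + b), so it maps G_A into itself when the alphabet is stable under
   a |-> a + b, which is the case for b = k t.  It changes the lower-right
   entry d of a matrix into d + k t c, c the lower-left entry.  If c is coprime
   to k, then t c runs through all residues mod k^(n-1), so d + k t c runs
   through the whole class of d mod k^n; by hypothesis such matrices exist with
   d in every class mod k. *)

From mathcomp Require Import all_boot all_order all_algebra.
From mathcomp Require Import ring.
Import GRing.Theory Num.Theory.
Set Implicit Arguments. Unset Strict Implicit.
Local Open Scope ring_scope.

Definition shear_mx (b : int) : 'M[int]_2 := 1%:M + b *: delta_mx i0 i1.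

Lemma gamma_shear (a b : nat) : gamma a *m shear_mx b%:Z = gamma (a + b).
Proof.
apply/matrixP => i j; rewrite !mxE !big_ord_recl big_ord0 !mxE.
by case: i => [[|[|?]] ?]; case: j => [[|[|?]] ?] //=;
  rewrite ?(mulr0, mul0r, addr0, add0r, mulr1, mul1r) // PoszD addrC.
Qed.

Lemma inG_mul_shear (A : pred nat) (b : nat) :
  (forall a, A a -> A (a + b)%N) ->
  forall M, inG A M -> inG A (M *m shear_mx b%:Z).
Proof.
move=> Ab M; elim=> [a Aa | P N GP _ _ IHN].
  by rewrite gamma_shear; apply: inG_gen; exact: Ab.
by rewrite -mulmxA; exact: inG_mul.
Qed.

Lemma shear_mx11 (M : 'M[int]_2) (b : int) :
  (M *m shear_mx b) i1 i1 = M i1 i1 + b * M i1 i0.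
Proof.
rewrite !mxE !big_ord_recl big_ord0 !mxE /= !mulr0 !addr0 add0r !mulr1.
by rewrite addrC [b * _]mulrC; congr (M i1 _ + M i1 _ * b); apply: val_inj.
Qed.

Lemma alphabetDMn (k rbar a t : nat) :
  alphabet k rbar a -> alphabet k rbar (a + k * t)%N.
Proof.
case/andP=> a_gt0 a_mod; apply/andP; split; first by rewrite addn_gt0 a_gt0.
by rewrite addnC mulnC modnMDl.
Qed.

Lemma coprimez_solve_mod (c m : int) : m != 0 -> coprimez c m ->
  forall s, exists t : nat, (t%:Z * c = s %[mod m])%Z.
Proof.
move=> m_nz /coprimezP [[u v] /= Bezout] s.
exists `|(s * u) %% m|%Z%N; rewrite gez0_abs ?modz_ge0 //.
rewrite modzMml (_ : s * u * c = - (s * v) * m + s * (u * c + v * m)); last by ring.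
by rewrite Bezout mulr1 modzMDl.
Qed.

Lemma eqz_mod_lift_coprime (k m c d x : int) : m != 0 -> coprimez c m ->
  (d = x %[mod k])%Z -> exists t : nat, (d + k * t%:Z * c = x %[mod k * m])%Z.
Proof.
move=> m_nz cop /eqP; rewrite eq_sym eqz_mod_dvd => /dvdzP [s xd].
have [t /eqP] := coprimez_solve_mod m_nz cop s; rewrite eqz_mod_dvd => m_dvd.
exists t; apply/eqP; rewrite eqz_mod_dvd.
rewrite (_ : _ - x = k * (t%:Z * c - s)); first exact: dvdz_mul.
by rewrite -(subrK d x) xd; ring.
Qed.

Theorem lemmaB9 (k rbar : nat) (hk : (2 <= k)%N)
  (hr : (0 < rbar <= k)%N)
  (H : forall r : int, exists2 M : 'M[int]_2,
         inG (alphabet k rbar) M &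
         gcdz (M i1 i0) k%:Z = 1%N /\ (M i1 i1 = r %[mod k%:Z])%Z) :
  forall n : nat, (1 <= n)%N ->
    forall x : int, exists2 d : int,
      inD (alphabet k rbar) d & (d = x %[mod (k ^ n)%:Z])%Z.
Proof.
move=> n n_gt0 x; have [M GM [c_coprime d_mod]] := H x.
have k_gt0 : (0 < k)%N by exact: leq_trans hk.
set m : int := k%:Z ^+ n.-1.
have kn : (k ^ n)%N%:Z = k%:Z * m by rewrite -exprS prednK // -!natz natrX.
have m_nz : m != 0 by rewrite expf_neq0 // eqz_nat -lt0n.
have cop : coprimez (M i1 i0) m by apply/coprimezXr/eqP.
have [t dt] := eqz_mod_lift_coprime m_nz cop d_mod.
exists (M i1 i1 + k%:Z * t%:Z * M i1 i0); last by rewrite kn.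
exists (M *m shear_mx (k * t)%N%:Z); last by rewrite shear_mx11 PoszM.
by apply: inG_mul_shear GM => a; exact: alphabetDMn.
Qed.
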